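(* Let $X$ be an affine variety over $\Bbbk$ and let $\mathcal E\subset\operatorname{End}(X)$ be a linear semigroup. Then: (1) for every $x\in X$ we have $\mathcal E(x)=M(x)$; (2) for every $x\in X$ the subset $\mathcal E(x)\subset X$ is closed and isomorphic to a vector space (an affine space); (3) $T_xM(x)=T_x\mathcal E(x)=\mathcal D_{\mathcal E}(x)$ for all $x\in X$. In particular, a closed subvariety $Y\subset X$ is $\mathcal D_{\mathcal E}$-invariant if and only if it is $\mathcal E$-stable, i.e. a union of $\mathcal E$-orbits.
   Context: $\Bbbk$ is an algebraically closed field of characteristic $0$. A vector field on an affine variety $X$ is a $\Bbbk$-derivation $\xi$ of $\mathcal O(X)$; its value $\xi(x)\in T_xX$ is the tangent vector $f\mapsto(\xi f)(x)$. For a set $\mathcal D$ of vector fields, a closed subvariety $Y\subset X$ is $\mathcal D$-invariant if $\xi(y)\in T_yY$ for all $y\in Y$, $\xi\in\mathcal D$; $M(x)$ denotes the smallest closed $\mathcal D$-invariant subvariety containing $x$, and $\mathcal D(x)=\{\xi(x)\mid\xi\in\mathcal D\}$. $\operatorname{End}(X)$, the semigroup of all morphisms $X\to X$ under composition, carries a natural structure of an affine ind-variety (an increasing union of closed affine subvarieties) making it an ind-semigroup. For a closed semi-subgroup $\mathcal E\subset\operatorname{End}(X)$ (containing $\mathrm{id}_X$) let $T_{\mathrm{id}}\mathcal E$ be its Zariski tangent space at $\mathrm{id}$ (direct limit of tangent spaces of the filtration); for $x\in X$ let $\mu_x\colon\mathcal E\to X$, $\phi\mapsto\phi(x)$, and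 for $A\in T_{\mathrm{id}}\mathcal E$ let $\xi_A$ be the vector field with $\xi_A(x)=(d\mu_x)_{\mathrm{id}}(A)$. Then $\mathcal D_{\mathcal E}:=\{\xi_A\mid A\in T_{\mathrm{id}}\mathcal E\}$, and $M(x)$ is taken with respect to $\mathcal D=\mathcal D_{\mathcal E}$. The orbit of $x$ is $\mathcal E(x)=\{\phi(x)\mid\phi\in\mathcal E\}$; $Y$ is $\mathcal E$-stable if $\phi(Y)\subset Y$ for all $\phi\in\mathcal E$. A semi-subgroup $\mathcal E\subset\operatorname{End}(X)$ is a linear semigroup if there is a closed embedding $X\hookrightarrow V$ into a finite-dimensional vector space such that the image of $\mathcal E$ in $\operatorname{Mor}(X,V)$ is a linear subspace. *)

From HB Require Import structures.
From mathcomp Require Import all_boot all_order all_algebra.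
From mathcomp Require Import mpoly.
Set Implicit Arguments. Unset Strict Implicit. Unset Printing Implicit Defensive.
Import Order.TTheory GRing.Theory.
Local Open Scope ring_scope.

Section Defs.
Variable K : closedFieldType.

Definition pt (n : nat) := 'I_n -> K.

Definition zclosed (N : nat) (S : pt N -> Prop) : Prop :=
  exists P : {mpoly K[N]} -> Prop,
    forall x, S x <-> (forall p, P p -> p.@[x] = 0).

Definition diffp (N : nat) (p : {mpoly K[N]}) (s v : pt N) : K :=
  \sum_(i < N) (mderiv i p).@[s] * v i.

Definition tangent (N : nat) (S : pt N -> Prop) (s : pt N) : pt N -> Prop :=
  fun v => forall p : {mpoly K[N]}, (forall y, S y -> p.@[y] = 0) -> diffp p s v = 0.

Definition pm_eval (n m : nat) (P : 'I_m -> {mpoly K[n]}) (x : pt n) : pt m :=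
  fun j => (P j).@[x].

Definition is_morphism (n m : nat) (X : pt n -> Prop) (f : pt n -> pt m) : Prop :=
  exists P : 'I_m -> {mpoly K[n]}, forall x, X x -> f x = pm_eval P x.

Definition subvar (n : nat) (X Y : pt n -> Prop) : Prop :=
  zclosed Y /\ forall y, Y y -> X y.

(* Coordinates on the finite-dimensional space of n-tuples of polynomials of
   degree <= d in n variables: coefficient of monomial m in component i. *)
Definition coordIdx (n d : nat) : finType := ('I_n * 'X_{1..n < d.+1})%type.
Definition cdim (n d : nat) : nat := #|{: coordIdx n d}|.

Definition evC (n d : nat) (c : pt (cdim n d)) (x : pt n) : pt n :=
  fun i => \sum_(m : 'X_{1..n < d.+1})
             c (enum_rank ((i, m) : coordIdx n d)) * \prod_(j < n) x j ^+ (m j).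

(* elements of End(X) are represented by maps K^n -> K^n, only their
   restrictions to X matter.  The (lifted) d-th filtration piece of E:
   coefficient vectors of degree <= d polynomial tuples inducing an element of E. *)
Definition Etilde (n : nat) (X : pt n -> Prop) (E : (pt n -> pt n) -> Prop) (d : nat)
  : pt (cdim n d) -> Prop :=
  fun c => exists f, E f /\ forall y, X y -> evC c y = f y.

Definition End_semisubgroup (n : nat) (X : pt n -> Prop) (E : (pt n -> pt n) -> Prop) : Prop :=
  (forall f, E f -> (forall x, X x -> X (f x)) /\ is_morphism X f) /\
  E (fun x => x) /\
  (forall f g, E f -> E g -> E (fun x => f (g x))).

Definition End_closed (n : nat) (X : pt n -> Prop) (E : (pt n -> pt n) -> Prop) : Prop :=
  forall d, zclosed (@Etilde n X E d).

(* E is a linear semigroup: for some closed embedding phi : X -> K^m, the set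
   { phi o f | f in E } is a linear subspace of Mor(X, K^m). *)
Definition linear_semigroup (n : nat) (X : pt n -> Prop) (E : (pt n -> pt n) -> Prop) : Prop :=
  exists (m : nat) (phi : 'I_m -> {mpoly K[n]}) (psi : 'I_n -> {mpoly K[m]}),
    zclosed (fun z => exists x, X x /\ z = pm_eval phi x) /\
    (forall x, X x -> pm_eval psi (pm_eval phi x) = x) /\
    (forall (a b : K) f g, E f -> E g ->
       exists h, E h /\ forall x, X x ->
         pm_eval phi (h x) = fun j => a * pm_eval phi (f x) j + b * pm_eval phi (g x) j).

(* D_E(x) = { xi_A(x) | A in T_id E } with xi_A(x) = (d mu_x)_id (A);
   T_id E is the direct limit of the tangent spaces at id of the filtration
   pieces, computed in the lifted coordinates, where mu_x is c |-> evC c x. *)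
Definition DE (n : nat) (X : pt n -> Prop) (E : (pt n -> pt n) -> Prop) (x : pt n)
  : pt n -> Prop :=
  fun v => exists (d : nat) (iota c : pt (cdim n d)),
    (forall y, X y -> evC iota y = y) /\
    tangent (@Etilde n X E d) iota c /\ v = evC c x.

Definition Dinvariant (n : nat) (D : pt n -> pt n -> Prop) (Y : pt n -> Prop) : Prop :=
  forall y, Y y -> forall v, D y v -> tangent Y y v.

Definition IsM (n : nat) (X : pt n -> Prop) (D : pt n -> pt n -> Prop) (x : pt n)
  (M : pt n -> Prop) : Prop :=
  subvar X M /\ Dinvariant D M /\ M x /\
  forall Y, subvar X Y -> Dinvariant D Y -> Y x -> forall y, M y -> Y y.

Definition Eorbit (n : nat) (E : (pt n -> pt n) -> Prop) (x : pt n) : pt n -> Prop :=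
  fun y => exists f, E f /\ y = f x.

Definition Estable (n : nat) (E : (pt n -> pt n) -> Prop) (Y : pt n -> Prop) : Prop :=
  forall f, E f -> forall y, Y y -> Y (f y).

Definition isAffineSpace (n : nat) (S : pt n -> Prop) : Prop :=
  exists (r : nat) (alpha : 'I_r -> {mpoly K[n]}) (beta : 'I_n -> {mpoly K[r]}),
    (forall t, S (pm_eval beta t)) /\
    (forall t, pm_eval alpha (pm_eval beta t) = t) /\
    (forall y, S y -> pm_eval beta (pm_eval alpha y) = y).

End Defs.

(* Let psi be a polynomial left inverse of the embedding phi : X -> K^m.  Linearity
   of E makes phi(E y) = {phi (f y) | f in E} a linear subspace of K^m for y in X, and
   the orbit E(y) is its preimage in X, mapped back onto it by psi: so E(y) is closed
   and isomorphic to an affine space.  For g in E the curve t |-> psi o (phi + t phi o g)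
   lies in E and passes through id, so dpsi maps phi(E x) into D_E(x); conversely a
   tangent vector v of E(x) at x is dpsi (dphi v) with dphi v in phi(E x).  Hence
   T_x E(x) = D_E(x) and E(x) is D_E-invariant.  It is the smallest such closed set
   because D_E-invariant closed sets Y are E-stable: if p vanishes on Y then so do all
   iterated derivatives of p o psi o phi along fields dpsi(l) with l(y) in phi(E y)
   (the correction terms of the Leibniz rule are of the same kind), and Taylor's
   formula in characteristic 0 along phi(g y) - phi y gives p (g y) = 0. *)

From HB Require Import structures.
From mathcomp Require Import all_boot all_order all_algebra.
From mathcomp Require Import mpoly.
From mathcomp Require Import ring zify.
From Stdlib Require Import Classical FunctionalExtensionality.
From Stdlib Require List.
Set Implicit Arguments. Unset Strict Implicit. Unset Printing Implicit Defensive.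
Import GRing.Theory.
Local Open Scope ring_scope.

(** * Polynomial curves and differentials *)

Section MPolyMaps.
Variable R : comRingType.

Lemma rmorph_mmap N (S S' : comRingType) (f : R -> S) (h : 'I_N -> S)
    (rho : {rmorphism S -> S'}) (p : {mpoly R[N]}) :
  rho (mmap f h p) = mmap (rho \o f) (rho \o h) p.
Proof.
rewrite /mmap rmorph_sum; apply: eq_bigr => m _.
rewrite rmorphM /mmap1 rmorph_prod; congr (_ * _).
by apply: eq_bigr => i _; rewrite rmorphXn.
Qed.

Lemma eq_mmap N (S : ringType) (f1 f2 : R -> S) (h1 h2 : 'I_N -> S) p :
  f1 =1 f2 -> h1 =1 h2 -> mmap f1 h1 p = mmap f2 h2 p.
Proof.
move=> ef eh; apply: eq_bigr => m _; rewrite ef; congr (_ * _).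
exact: mmap1_eq.
Qed.

Definition mcomp N M (F : 'I_M -> {mpoly R[N]}) (q : {mpoly R[M]}) : {mpoly R[N]} :=
  mmap (@mpolyC N R) F q.

Lemma meval_mcomp N M (F : 'I_M -> {mpoly R[N]}) q (s : 'I_N -> R) :
  (mcomp F q).@[s] = q.@[fun j => (F j).@[s]].
Proof.
by rewrite /mcomp (rmorph_mmap _ _ (meval s)); apply: eq_mmap => // c; rewrite /= mevalC.
Qed.

Definition pcurve N (G : 'I_N -> {poly R}) (p : {mpoly R[N]}) : {poly R} :=
  mmap (@polyC R) G p.

Lemma pcurveC N (G : 'I_N -> {poly R}) c : pcurve G c%:MP = c%:P.
Proof. by rewrite /pcurve mmapC. Qed.

Lemma pcurveZ N (G : 'I_N -> {poly R}) c p : pcurve G (c *: p) = c%:P * pcurve G p.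
Proof. by rewrite -mul_mpolyC -(pcurveC G) /pcurve rmorphM. Qed.

Lemma horner_pcurve N (G : 'I_N -> {poly R}) p t :
  (pcurve G p).[t] = p.@[fun i => (G i).[t]].
Proof.
rewrite -horner_evalE /pcurve rmorph_mmap; apply: eq_mmap => // c.
by rewrite /= horner_evalE hornerC.
Qed.

Lemma pcurve_mcomp N M (G : 'I_N -> {poly R}) (F : 'I_M -> {mpoly R[N]}) q :
  pcurve G (mcomp F q) = pcurve (fun j => pcurve G (F j)) q.
Proof. by rewrite /pcurve /mcomp rmorph_mmap; apply: eq_mmap => c //=; rewrite mmapC. Qed.

Lemma deriv_pcurve N (G : 'I_N -> {poly R}) p :
  (pcurve G p)^`() = \sum_(i < N) pcurve G (mderiv i p) * (G i)^`().
Proof.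
pose chain q := (pcurve G q)^`() = \sum_(i < N) pcurve G (mderiv i q) * (G i)^`().
have chainC c : chain c%:MP.
  by rewrite /chain /pcurve mmapC derivC big1 // => i _; rewrite mderivC mmap0 mul0r.
have chainD q1 q2 : chain q1 -> chain q2 -> chain (q1 + q2).
  rewrite /chain /pcurve !rmorphD derivD => -> ->; rewrite -big_split /=.
  by apply: eq_bigr => i _; rewrite mderivD rmorphD mulrDl.
have chainM q1 q2 : chain q1 -> chain q2 -> chain (q1 * q2).
  rewrite /chain /pcurve rmorphM derivM => -> ->.
  rewrite mulr_suml mulr_sumr -big_split /=; apply: eq_bigr => i _.
  rewrite mderivM rmorphD !rmorphM /=; ring.
have chainX j : chain 'X_j.
  rewrite /chain /pcurve mmapX mmap1U (bigD1 j) //= big1 ?addr0.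
    by rewrite mderivX mnm1E eqxx -{1}[U_(j)%MM]add0m addmK mpolyX0 scale1r rmorph1 mul1r.
  by move=> i /negPf hij; rewrite mderivX mnm1E eq_sym hij scale0r mmap0 mul0r.
rewrite [p]mpolyE; apply: (big_ind chain) => [||m _]; [by rewrite -(mpolyC0 N R)|exact: chainD|].
rewrite -mul_mpolyC; apply: (chainM) => //; rewrite mpolyXE_id.
apply: (big_ind chain) => [||i _]; [by rewrite -(mpolyC1 N R)|exact: chainM|].
by elim: (m i) => [|k IH]; [rewrite expr0 -(mpolyC1 N R) | rewrite exprS; apply: (chainM)].
Qed.

Definition pline N (z w : 'I_N -> R) : 'I_N -> {poly R} :=
  fun i => (z i)%:P + (w i)%:P * 'X.

Lemma horner_pline N (z w : 'I_N -> R) t i : (pline z w i).[t] = z i + w i * t.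
Proof. by rewrite /pline hornerD hornerC hornerMX hornerC. Qed.

Lemma pline0 N (z w : 'I_N -> R) i : (pline z w i).[0] = z i.
Proof. by rewrite horner_pline mulr0 addr0. Qed.

Lemma deriv_pline N (z w : 'I_N -> R) i : (pline z w i)^`() = (w i)%:P.
Proof. by rewrite /pline derivD derivC add0r derivM derivC derivX mul0r add0r mulr1. Qed.

End MPolyMaps.

Section Differentials.
Variables (K : closedFieldType) (N : nat).
Implicit Types (p q : {mpoly K[N]}) (s v : pt K N).

Lemma eq_diffp p s1 s2 v1 v2 : s1 =1 s2 -> v1 =1 v2 -> diffp p s1 v1 = diffp p s2 v2.
Proof.
move=> es ev; apply: eq_bigr => i _.
by rewrite ev; congr (_ * _); apply: meval_eq.
Qed.

Lemma deriv0_pcurve (G : 'I_N -> {poly K}) p :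
  ((pcurve G p)^`()).[0] = diffp p (fun i => (G i).[0]) (fun i => (G i)^`().[0]).
Proof.
rewrite deriv_pcurve horner_sum; apply: eq_bigr => i _.
by rewrite hornerM horner_pcurve.
Qed.

Lemma diffp_pline p s v : diffp p s v = ((pcurve (pline s v) p)^`()).[0].
Proof.
by rewrite deriv0_pcurve; apply: eq_diffp => i; rewrite ?pline0 // deriv_pline hornerC.
Qed.

Lemma diffpD p q s v : diffp (p + q) s v = diffp p s v + diffp q s v.
Proof. by rewrite /diffp -big_split; apply: eq_bigr => i _; rewrite mderivD mevalD mulrDl. Qed.

Lemma diffpB p q s v : diffp (p - q) s v = diffp p s v - diffp q s v.
Proof. by rewrite /diffp -sumrB; apply: eq_bigr => i _; rewrite mderivB mevalB mulrBl. Qed.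

Lemma diffpZ c p s v : diffp (c *: p) s v = c * diffp p s v.
Proof. by rewrite /diffp mulr_sumr; apply: eq_bigr => i _; rewrite mderivZ mevalZ mulrA. Qed.

Lemma diffpM p q s v :
  diffp (p * q) s v = diffp p s v * q.@[s] + p.@[s] * diffp q s v.
Proof.
rewrite /diffp mulr_suml mulr_sumr -big_split; apply: eq_bigr => i _ /=.
rewrite mderivM mevalD !mevalM; ring.
Qed.

Lemma diffp_sum (I : Type) (r : seq I) (F : I -> {mpoly K[N]}) s v :
  diffp (\sum_(i <- r) F i) s v = \sum_(i <- r) diffp (F i) s v.
Proof.
elim: r => [|a r IH]; last by rewrite !big_cons diffpD IH.
by rewrite !big_nil /diffp big1 // => i _; rewrite mderiv0 meval0 mul0r.
Qed.

Lemma diffpXU i s v : diffp 'X_i s v = v i.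
Proof.
rewrite /diffp (bigD1 i) //= big1 ?addr0.
  by rewrite mderivX mnm1E eqxx -{1}[U_(i)%MM]add0m addmK mpolyX0 scale1r meval1 mul1r.
by move=> j /negPf hij; rewrite mderivX mnm1E eq_sym hij scale0r meval0 mul0r.
Qed.

End Differentials.

Definition pm_diff (K : closedFieldType) N M (F : 'I_M -> {mpoly K[N]}) (s v : pt K N)
  : pt K M := fun j => diffp (F j) s v.

Definition pm_comp (R : comRingType) N M L (G : 'I_L -> {mpoly R[M]})
  (F : 'I_M -> {mpoly R[N]}) : 'I_L -> {mpoly R[N]} := fun k => mcomp F (G k).

Section ChainRule.
Variables (K : closedFieldType) (N M L : nat).

Lemma diffp_mcomp (F : 'I_M -> {mpoly K[N]}) (q : {mpoly K[M]}) s v :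
  diffp (mcomp F q) s v = diffp q (pm_eval F s) (pm_diff F s v).
Proof.
rewrite diffp_pline pcurve_mcomp deriv0_pcurve; apply: eq_diffp => j.
  by rewrite horner_pcurve; apply: meval_eq => i; rewrite pline0.
by rewrite -diffp_pline.
Qed.

Lemma pm_eval_comp (G : 'I_L -> {mpoly K[M]}) (F : 'I_M -> {mpoly K[N]}) s :
  pm_eval (pm_comp G F) s = pm_eval G (pm_eval F s).
Proof. by apply: functional_extensionality => k; rewrite /pm_eval meval_mcomp. Qed.

Lemma pm_diff_comp (G : 'I_L -> {mpoly K[M]}) (F : 'I_M -> {mpoly K[N]}) s v :
  pm_diff (pm_comp G F) s v = pm_diff G (pm_eval F s) (pm_diff F s v).
Proof. by apply: functional_extensionality => k; rewrite /pm_diff diffp_mcomp. Qed.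

End ChainRule.

Section Tangents.
Variable K : closedFieldType.
Hypothesis charK0 : [pchar K] =i pred0.

Lemma natr_inj_pchar0 : injective (fun k : nat => k%:R : K).
Proof.
move=> a b /= eab; apply/eqP; move/pcharf0P: charK0 => natr_eq0.
wlog lab : a b eab / (a <= b)%N.
  move=> W; case: (leqP a b) => [|/ltnW] l; first exact: W.
  by rewrite eq_sym; apply: W.
by rewrite eqn_leq lab /= -subn_eq0 -natr_eq0 natrB // eab subrr.
Qed.

Lemma poly_eq0_of_horner (P : {poly K}) : (forall t, P.[t] = 0) -> P = 0.
Proof.
move=> P0; apply: (@roots_geq_poly_eq0 _ P [seq k%:R | k <- iota 0 (size P)]).
- by apply/allP => _ /mapP [k _ ->]; rewrite /root P0.
- by rewrite map_inj_uniq ?iota_uniq //; apply: natr_inj_pchar0.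
- by rewrite size_map size_iota.
Qed.

Lemma tangent_curve N (S : pt K N -> Prop) (G : 'I_N -> {poly K}) :
  (forall t, S (fun i => (G i).[t])) ->
  tangent S (fun i => (G i).[0]) (fun i => (G i)^`().[0]).
Proof.
move=> SG p p0; rewrite -deriv0_pcurve.
suff -> : pcurve G p = 0 by rewrite deriv0 horner0.
by apply: poly_eq0_of_horner => t; rewrite horner_pcurve; apply: p0.
Qed.

End Tangents.

Section TangentSpaces.
Variables (K : closedFieldType) (N M : nat).

Lemma tangentS (S1 S2 : pt K N -> Prop) s v :
  (forall y, S1 y -> S2 y) -> tangent S1 s v -> tangent S2 s v.
Proof. by move=> S12 T1 p p0; apply: T1 => y /S12; apply: p0. Qed.

Lemma tangent_map (S1 : pt K N -> Prop) (S2 : pt K M -> Prop) (F : 'I_M -> {mpoly K[N]}) s v :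
  (forall y, S1 y -> S2 (pm_eval F y)) ->
  tangent S1 s v -> tangent S2 (pm_eval F s) (pm_diff F s v).
Proof.
move=> FS T1 q q0; rewrite -diffp_mcomp; apply: T1 => y S1y.
by rewrite meval_mcomp; apply: q0; apply: FS.
Qed.

Lemma tangent_fixed (S : pt K N -> Prop) (F : 'I_N -> {mpoly K[N]}) s v :
  (forall y, S y -> pm_eval F y = y) -> tangent S s v -> pm_diff F s v = v.
Proof.
move=> Fid T; apply: functional_extensionality => i; apply/eqP; rewrite -subr_eq0.
rewrite /pm_diff -(diffpXU i s v) -diffpB; apply/eqP/T => y Sy.
by rewrite mevalB mevalXU -[in X in _ - X](Fid y Sy) subrr.
Qed.

End TangentSpaces.

Section Taylor.
Variables (R : comRingType) (N : nat).

Fixpoint dirderivs (us : seq ('I_N -> R)) (Q : {mpoly R[N]}) : {mpoly R[N]} :=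
  if us is u :: us' then \sum_(j < N) u j *: dirderivs us' (mderiv j Q) else Q.

Lemma meval_dirderivs_cons u us Q (z : 'I_N -> R) :
  (dirderivs (u :: us) Q).@[z] = \sum_(j < N) u j * (dirderivs us (mderiv j Q)).@[z].
Proof. by rewrite /= raddf_sum; apply: eq_bigr => j _; rewrite /= mevalZ. Qed.

Lemma pcurve_dirderivs_cons (G : 'I_N -> {poly R}) u us Q :
  pcurve G (dirderivs (u :: us) Q) = \sum_(j < N) (u j)%:P * pcurve G (dirderivs us (mderiv j Q)).
Proof. by rewrite /pcurve raddf_sum; apply: eq_bigr => j _; apply: pcurveZ. Qed.

Lemma derivn_pcurve_pline (z w : 'I_N -> R) Q k :
  (pcurve (pline z w) Q)^`(k) = pcurve (pline z w) (dirderivs (nseq k w) Q).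
Proof.
have deriv_dirderivs k' Q' : (pcurve (pline z w) (dirderivs (nseq k' w) Q'))^`() =
    pcurve (pline z w) (dirderivs (nseq k'.+1 w) Q').
  elim: k' Q' => [|k' IH] Q'; rewrite pcurve_dirderivs_cons.
    by rewrite deriv_pcurve; apply: eq_bigr => j _; rewrite deriv_pline mulrC.
  rewrite pcurve_dirderivs_cons raddf_sum; apply: eq_bigr => j _.
  by rewrite /= !mul_polyC derivZ IH.
by elim: k => [|k IH]; rewrite ?derivn0 // derivnS IH deriv_dirderivs.
Qed.

End Taylor.

Lemma taylor_eq0 (K : closedFieldType) N (z w : pt K N) (Q : {mpoly K[N]}) :
  [pchar K] =i pred0 ->
  (forall k, (dirderivs (nseq k w) Q).@[z] = 0) -> Q.@[fun j => z j + w j] = 0.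
Proof.
move=> charK0 Q0; set P := pcurve (pline z w) Q.
have P0 : P = 0.
  apply/polyP => k; rewrite coef0.
  have : (P^`(k)).[0] = 0.
    rewrite derivn_pcurve_pline horner_pcurve -[RHS](Q0 k).
    by apply: meval_eq => j; rewrite pline0.
  rewrite horner_coef0 coef_derivn addn0 ffactnn -mulr_natr => /eqP.
  rewrite mulf_eq0 => /orP [/eqP //|]; move/pcharf0P: charK0 => ->.
  by rewrite eqn0Ngt fact_gt0.
have := congr1 (horner^~ 1) P0; rewrite /= horner0 horner_pcurve => <-.
by apply: meval_eq => j; rewrite horner_pline mulr1.
Qed.

(** * Linear subspaces *)

Section RowSpaces.
Variables (F : fieldType) (m : nat) (W : 'rV[F]_m -> Prop).
Hypotheses (W0 : W 0) (W_lin : forall a b u v, W u -> W v -> W (a *: u + b *: v)).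

Lemma rowspace_of_subspace_ext (A : 'M[F]_m) d : (m - \rank A <= d)%N ->
  (forall u, (u <= A)%MS -> W u) -> exists B : 'M[F]_m, forall u, W u <-> (u <= B)%MS.
Proof.
elim: d A => [|d IH] A rkA AW.
  exists A => u; split=> [_|]; last exact: AW.
  by apply: submx_full; rewrite /row_full eqn_leq rank_leq_col; lia.
case: (classic (exists u, W u /\ ~~ (u <= A)%MS)) => [[u [Wu uA]]|noext]; last first.
  exists A => u; split=> [Wu|]; last exact: AW.
  by apply: NNPP => nuA; apply: noext; exists u; split=> //; apply/negP.
have ltA : (A < A + u)%MS.
  by rewrite ltmxE addsmxSl addsmx_sub negb_and uA orbT.
apply: (IH (A + u)%MS); first by have := rank_ltmx ltA; lia.
move=> v /sub_addsmxP [[v1 v2] /= ->].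
rewrite -[v1 *m A]scale1r [v2]mx11_scalar mul_scalar_mx.
by apply: W_lin => //; apply: AW; apply: submxMl.
Qed.

Lemma rowspace_of_subspace : exists A : 'M[F]_m, forall u, W u <-> (u <= A)%MS.
Proof.
by apply: (@rowspace_of_subspace_ext 0 m (leq_subr _ _)) => u; rewrite submx0 => /eqP ->.
Qed.

End RowSpaces.

Definition subspace (K : closedFieldType) m (W : pt K m -> Prop) : Prop :=
  W (fun _ => 0) /\
  forall a b z1 z2, W z1 -> W z2 -> W (fun j => a * z1 j + b * z2 j).

Section LinearMaps.
Variable K : closedFieldType.

Definition rowv m (z : pt K m) : 'rV[K]_m := \row_j z j.

Lemma rowv_inj m : injective (@rowv m).
Proof.
move=> z1 z2 /matrixP e; apply: functional_extensionality => j.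
by have := e 0 j; rewrite !mxE.
Qed.

Definition mxpm a b (M : 'M[K]_(a, b)) : 'I_b -> {mpoly K[a]} :=
  fun j => \sum_(k < a) M k j *: 'X_k.

Lemma rowv_mxpm a b (M : 'M[K]_(a, b)) t : rowv (pm_eval (mxpm M) t) = rowv t *m M.
Proof.
apply/matrixP => i j; rewrite ord1 !mxE /pm_eval /mxpm raddf_sum.
by apply: eq_bigr => k _; rewrite /= mevalZ mevalXU mxE mulrC.
Qed.

Lemma pm_diff_mxpm a b (M : 'M[K]_(a, b)) s v : pm_diff (mxpm M) s v = pm_eval (mxpm M) v.
Proof.
apply: functional_extensionality => j; rewrite /pm_diff /pm_eval /mxpm diffp_sum raddf_sum.
by apply: eq_bigr => k _; rewrite /= diffpZ diffpXU mevalZ mevalXU.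
Qed.

Variables (m : nat) (W : pt K m -> Prop).
Hypothesis subW : subspace W.

Lemma subspace_rowv : exists A : 'M[K]_m, forall z, W z <-> (rowv z <= A)%MS.
Proof.
case: subW => W0 W_lin.
have WrowvE z : W (fun j => rowv z 0 j) <-> W z.
  by have -> : (fun j => rowv z 0 j) = z by apply: functional_extensionality => j; rewrite mxE.
have [A WA] : exists A : 'M[K]_m, forall u : 'rV_m, W (fun j => u 0 j) <-> (u <= A)%MS.
  apply: rowspace_of_subspace => [|a b u v Wu Wv].
    by have -> : (fun j => (0 : 'rV[K]_m) 0 j) = (fun _ => 0)
      by apply: functional_extensionality => j; rewrite mxE.
  have -> : (fun j => (a *: u + b *: v) 0 j) = (fun j => a * u 0 j + b * v 0 j)
    by apply: functional_extensionality => j; rewrite !mxE.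
  exact: W_lin.
by exists A => z; rewrite -WA WrowvE.
Qed.

Lemma subspace_eqns : exists C : 'M[K]_m, forall z, W z <-> forall j, (mxpm C j).@[z] = 0.
Proof.
have [A WA] := subspace_rowv; exists (cokermx A) => z.
rewrite WA submxE -rowv_mxpm; split=> [/eqP/matrixP z0 j | z0].
  by have := z0 0 j; rewrite !mxE.
by apply/eqP/matrixP => i j; rewrite ord1 !mxE; apply: z0.
Qed.

Lemma zclosed_subspace : zclosed W.
Proof.
have [C WC] := subspace_eqns.
exists (fun p => exists j, p = mxpm C j) => z; rewrite WC.
by split=> [z0 _ [j ->] | z0 j]; [apply: z0 | apply: z0; exists j].
Qed.

Lemma tangent_subspace z u : tangent W z u -> W u.
Proof.
have [C WC] := subspace_eqns; move=> T; apply/WC => j.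
have := congr1 (fun f => f j) (pm_diff_mxpm C z u); rewrite /pm_diff /pm_eval /= => <-.
by apply: T => y /WC.
Qed.

End LinearMaps.

Lemma subspace_tangent (K : closedFieldType) m (W : pt K m -> Prop) z u :
  [pchar K] =i pred0 -> subspace W -> W z -> W u -> tangent W z u.
Proof.
move=> charK0 [_ W_lin] Wz Wu.
have := @tangent_curve _ charK0 _ W (pline z u).
have -> : (fun i => (pline z u i).[0]) = z.
  by apply: functional_extensionality => i; rewrite pline0.
have -> : (fun i => (pline z u i)^`().[0]) = u.
  by apply: functional_extensionality => i; rewrite deriv_pline hornerC.
apply=> t; have := W_lin 1 t _ _ Wz Wu.
by congr W; apply: functional_extensionality => i; rewrite horner_pline mul1r mulrC.
Qed.

Section Charts.
Variables (K : closedFieldType) (n m : nat).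
Variables (phi : 'I_m -> {mpoly K[n]}) (psi : 'I_n -> {mpoly K[m]}).
Local Notation Phi := (pm_eval phi).
Local Notation Psi := (pm_eval psi).

Lemma zclosed_preimage (X : pt K n -> Prop) (S : pt K m -> Prop) :
  zclosed X -> zclosed S -> zclosed (fun y => X y /\ S (Phi y)).
Proof.
move=> [PX XE] [PS SE].
exists (fun p => PX p \/ exists2 q, PS q & p = mcomp phi q) => y; rewrite XE SE.
split=> [[Xy Sy] p [/Xy // | [q /Sy]] | y0].
  by rewrite /pm_eval => q0 ->; rewrite meval_mcomp.
split=> [p Pp | q Pq]; first by apply: y0; left.
by rewrite -meval_mcomp; apply: y0; right; exists q.
Qed.

Lemma isAffineSpace_chart (S : pt K n -> Prop) (W : pt K m -> Prop) : subspace W ->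
  (forall y, S y -> W (Phi y) /\ Psi (Phi y) = y) ->
  (forall z, W z -> S (Psi z) /\ Phi (Psi z) = z) ->
  isAffineSpace S.
Proof.
move=> subW SW WS; have [A WA] := subspace_rowv subW.
pose B := row_base A; pose P := pinvmx B.
have WB t : W (pm_eval (mxpm B) t).
  by apply/WA; rewrite rowv_mxpm -(eq_row_base A) submxMl.
exists (\rank A), (pm_comp (mxpm P) phi), (pm_comp psi (mxpm B)).
split; [|split] => [t | t | y Sy]; rewrite !pm_eval_comp.
- by case: (WS _ (WB t)).
- apply: rowv_inj; case: (WS _ (WB t)) => _ ->.
  by rewrite !rowv_mxpm mulmxKp // row_base_free.
- have [WPhi_y PsiPhi_y] := SW y Sy; rewrite -[RHS]PsiPhi_y; congr Psi.
  apply: rowv_inj; rewrite !rowv_mxpm mulmxKpV //.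
  by rewrite /B eq_row_base -WA.
Qed.

End Charts.

(** * Curves in the coefficient spaces of End(X) *)

Section Coefficients.
Variables (K : closedFieldType) (n d : nat).

Definition evC_pm (x : pt K n) : 'I_n -> {mpoly K[cdim n d]} :=
  fun i => \sum_(mm : 'X_{1..n < d.+1})
    (\prod_(j < n) x j ^+ mm j) *: 'X_(enum_rank ((i, mm) : coordIdx n d)).

Lemma pm_eval_evC_pm x c : pm_eval (evC_pm x) c = evC c x.
Proof.
apply: functional_extensionality => i; rewrite /pm_eval /evC_pm /evC raddf_sum.
by apply: eq_bigr => mm _; rewrite /= mevalZ mevalXU mulrC.
Qed.

Lemma pm_diff_evC_pm x s c : pm_diff (evC_pm x) s c = evC c x.
Proof.
apply: functional_extensionality => i; rewrite /pm_diff /evC_pm /evC diffp_sum.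
by apply: eq_bigr => mm _; rewrite diffpZ diffpXU mulrC.
Qed.

Definition evC_curve (Ga : 'I_(cdim n d) -> {poly K}) (y : pt K n) (i : 'I_n) : {poly K} :=
  \sum_(mm : 'X_{1..n < d.+1})
    (\prod_(j < n) y j ^+ mm j) *: Ga (enum_rank ((i, mm) : coordIdx n d)).

Lemma horner_evC_curve Ga y i t : (evC_curve Ga y i).[t] = evC (fun k => (Ga k).[t]) y i.
Proof. by rewrite /evC_curve horner_sum; apply: eq_bigr => mm _; rewrite hornerZ mulrC. Qed.

Lemma deriv0_evC_curve Ga y i : ((evC_curve Ga y i)^`()).[0] = evC (fun k => (Ga k)^`().[0]) y i.
Proof.
rewrite /evC_curve raddf_sum horner_sum; apply: eq_bigr => mm _.
by rewrite /= derivZ hornerZ mulrC.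
Qed.

End Coefficients.

Lemma meval_msize_bound (R : comRingType) n (p : {mpoly R[n]}) (y : 'I_n -> R) b :
  (msize p <= b)%N -> p.@[y] = \sum_(mm : 'X_{1..n < b}) p@_mm * \prod_(j < n) y j ^+ mm j.
Proof.
move=> hb; rewrite {1}(mpolywE hb) raddf_sum; apply: eq_bigr => mm _.
by rewrite /= mevalZ mevalX.
Qed.

Lemma exists_coef_curve (K : closedFieldType) n (P : 'I_n -> {poly {mpoly K[n]}}) :
  exists d (Ga : 'I_(cdim n d) -> {poly K}),
    forall y i, evC_curve Ga y i = map_poly (meval y) (P i).
Proof.
pose d := \max_(i < n) \max_(k < size (P i)) msize (P i)`_k.
have msizeP i k : (msize (P i)`_k <= d.+1)%N.
  apply: leq_trans (leqnSn d); case: (ltnP k (size (P i))) => hk.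
    apply: leq_trans (leq_bigmax_cond i isT).
    exact: (leq_bigmax_cond (Ordinal hk) isT).
  by rewrite nth_default // msize0.
exists d, (fun k : 'I_(cdim n d) =>
  \poly_(l < size (P (enum_val k).1)) ((P (enum_val k).1)`_l)@_((enum_val k).2)).
move=> y i; apply/polyP => l; rewrite coef_map /= (meval_msize_bound y (msizeP i l)).
rewrite /evC_curve coef_sum; apply: eq_bigr => mm _.
rewrite coefZ enum_rankK coef_poly mulrC; case: ltnP => // hl.
by rewrite nth_default // mcoeff0.
Qed.

Lemma DE_of_curve (K : closedFieldType) n (X : pt K n -> Prop) (E : (pt K n -> pt K n) -> Prop)
    (P : 'I_n -> {poly {mpoly K[n]}}) x :
  [pchar K] =i pred0 ->
  (forall t, exists2 f, E f & forall y, X y -> f y = fun i => (map_poly (meval y) (P i)).[t]) ->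
  (forall y, X y -> (fun i => (map_poly (meval y) (P i)).[0]) = y) ->
  DE X E x (fun i => ((map_poly (meval x) (P i))^`()).[0]).
Proof.
move=> charK0 PE P0; have [d [Ga GaP]] := exists_coef_curve P.
exists d, (fun k => (Ga k).[0]), (fun k => (Ga k)^`().[0]); split; [|split].
- move=> y Xy; rewrite -[RHS](P0 y Xy); apply: functional_extensionality => i.
  by rewrite -horner_evC_curve GaP.
- apply: tangent_curve => // t; have [f Ef fP] := PE t.
  exists f; split=> // y Xy; rewrite fP //; apply: functional_extensionality => i.
  by rewrite -horner_evC_curve GaP.
- by apply: functional_extensionality => i; rewrite -deriv0_evC_curve GaP.
Qed.

(** * Iterated derivatives along vector fields *)

Section DerivativesAlongFields.
Variables (K : closedFieldType) (n m : nat) (phi : 'I_m -> {mpoly K[n]}).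
Local Notation field := ('I_m -> {mpoly K[n]}).

Definition mderiv_along (V : 'I_n -> {mpoly K[n]}) (p : {mpoly K[n]}) : {mpoly K[n]} :=
  \sum_(i < n) mderiv i p * V i.

Lemma meval_mderiv_along V p y : (mderiv_along V p).@[y] = diffp p y (pm_eval V y).
Proof. by rewrite /mderiv_along raddf_sum; apply: eq_bigr => i _; rewrite /= mevalM. Qed.

Fixpoint dirderivs_along (ls : seq field) (Q : {mpoly K[m]}) : {mpoly K[n]} :=
  if ls is l :: ls' then \sum_(j < m) l j * dirderivs_along ls' (mderiv j Q)
  else mcomp phi Q.

Lemma meval_dirderivs_along ls Q y :
  (dirderivs_along ls Q).@[y] = (dirderivs [seq pm_eval l y | l <- ls] Q).@[pm_eval phi y].
Proof.
elim: ls Q => [|l ls IH] Q /=; first by rewrite meval_mcomp.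
rewrite raddf_sum meval_dirderivs_cons; apply: eq_bigr => j _.
by rewrite /= mevalM IH.
Qed.

Fixpoint replace_each (f : field -> field) (ls : seq field) : seq (seq field) :=
  if ls is l :: ls' then (f l :: ls') :: map (cons l) (replace_each f ls') else [::].

Lemma diffp_dirderivs_along (f : field -> field) ls Q y v :
  (forall l j, diffp (l j) y v = (f l j).@[y]) ->
  diffp (dirderivs_along ls Q) y v =
    (dirderivs (rcons [seq pm_eval l y | l <- ls] (pm_diff phi y v)) Q).@[pm_eval phi y] +
    \sum_(ls' <- replace_each f ls) (dirderivs_along ls' Q).@[y].
Proof.
move=> fP; elim: ls Q => [|l ls IH] Q /=.
  rewrite big_nil addr0 diffp_mcomp raddf_sum; apply: eq_bigr => j _.
  by rewrite /= mevalZ mulrC.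
rewrite diffp_sum big_cons big_map meval_dirderivs_cons.
have -> : (dirderivs_along (f l :: ls) Q).@[y] =
    \sum_(j < m) (f l j).@[y] * (dirderivs_along ls (mderiv j Q)).@[y].
  by rewrite /= raddf_sum; apply: eq_bigr => j _; rewrite /= mevalM.
have -> : \sum_(ls' <- replace_each f ls) (dirderivs_along (l :: ls') Q).@[y] =
    \sum_(j < m) (l j).@[y] *
      \sum_(ls' <- replace_each f ls) (dirderivs_along ls' (mderiv j Q)).@[y].
  under eq_bigr do rewrite /= raddf_sum.
  rewrite exchange_big /=; apply: eq_bigr => j _; rewrite mulr_sumr.
  by apply: eq_bigr => ls' _; rewrite /= mevalM.
rewrite -!big_split /=; apply: eq_bigr => j _.
rewrite diffpM IH fP meval_dirderivs_along /pm_eval; ring.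
Qed.

End DerivativesAlongFields.

(** * Linear semigroups *)

Section LinearSemigroup.
Variable K : closedFieldType.
Hypothesis charK0 : [pchar K] =i pred0.
Variables (n : nat) (X : pt K n -> Prop) (E : (pt K n -> pt K n) -> Prop).
Hypothesis semiE : End_semisubgroup X E.
Variables (m : nat) (phi : 'I_m -> {mpoly K[n]}) (psi : 'I_n -> {mpoly K[m]}).
Hypothesis phiK : forall x, X x -> pm_eval psi (pm_eval phi x) = x.
Hypothesis linE : forall (a b : K) f g, E f -> E g ->
  exists h, E h /\ forall x, X x ->
    pm_eval phi (h x) = fun j => a * pm_eval phi (f x) j + b * pm_eval phi (g x) j.

Local Notation Phi := (pm_eval phi).
Local Notation Psi := (pm_eval psi).

Lemma E_maps_to f : E f -> forall x, X x -> X (f x).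
Proof. by case: semiE => EX _ Ef; case: (EX f Ef). Qed.

Lemma E_morphism f : E f -> is_morphism X f.
Proof. by case: semiE => EX _ Ef; case: (EX f Ef). Qed.

Lemma E_id : E id.
Proof. by case: semiE => _ []. Qed.

Lemma E_comp f g : E f -> E g -> E (fun x => f (g x)).
Proof. by case: semiE => _ [] _; apply. Qed.

Definition phi_orbit (y : pt K n) (z : pt K m) : Prop := exists2 f, E f & z = Phi (f y).

Lemma meval_psi_phi i y : X y -> (psi i).@[Phi y] = y i.
Proof. by move/phiK/(congr1 (fun f => f i)). Qed.

Lemma phi_orbit_self y : phi_orbit y (Phi y).
Proof. by exists id => //; apply: E_id. Qed.

Lemma subspace_phi_orbit y : X y -> subspace (phi_orbit y).
Proof.
move=> Xy; have phi_orbit_lin a b z1 z2 : phi_orbit y z1 -> phi_orbit y z2 ->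
    phi_orbit y (fun j => a * z1 j + b * z2 j).
  case=> f Ef -> [g Eg ->]; have [h [Eh hE]] := linE a b Ef Eg.
  by exists h => //; rewrite hE.
split=> //; have := phi_orbit_lin 0 0 _ _ (phi_orbit_self y) (phi_orbit_self y).
by congr (phi_orbit y); apply: functional_extensionality => j; rewrite !mul0r addr0.
Qed.

Lemma phi_orbit_comp h y z : E h -> phi_orbit (h y) z -> phi_orbit y z.
Proof. by move=> Eh [f Ef ->]; exists (fun x => f (h x)) => //; apply: E_comp. Qed.

Lemma phi_orbit_psi y z : X y -> phi_orbit y z -> Eorbit E y (Psi z) /\ Phi (Psi z) = z.
Proof. by move=> Xy [f Ef ->]; rewrite phiK; [split=> //; exists f | apply: E_maps_to]. Qed.

Lemma EorbitE x y : X x -> Eorbit E x y <-> X y /\ phi_orbit x (Phi y).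
Proof.
move=> Xx; split=> [[f [Ef ->]] | [Xy xy]]; first by split; [apply: E_maps_to | exists f].
by have [] := phi_orbit_psi Xx xy; rewrite phiK.
Qed.

Lemma Eorbit_trans x y z : Eorbit E x y -> Eorbit E y z -> Eorbit E x z.
Proof. by case=> f [Ef ->] [g [Eg ->]]; exists (fun u => g (f u)); split=> //; apply: E_comp. Qed.

Lemma Eorbit_subX x y : X x -> Eorbit E x y -> X y.
Proof. by move=> Xx [f [Ef ->]]; apply: E_maps_to. Qed.

Lemma zclosed_Eorbit x : zclosed X -> X x -> zclosed (Eorbit E x).
Proof.
move=> clX Xx; have [P PE] := zclosed_preimage phi clX (zclosed_subspace (subspace_phi_orbit Xx)).
by exists P => y; rewrite EorbitE.
Qed.

Lemma isAffineSpace_Eorbit x : X x -> isAffineSpace (Eorbit E x).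
Proof.
move=> Xx; apply: (isAffineSpace_chart (phi := phi) (psi := psi) (subspace_phi_orbit Xx)).
  by move=> y /(EorbitE _ Xx) [Xy xy]; rewrite phiK.
by move=> z; apply: phi_orbit_psi.
Qed.

Lemma DE_tangent_Eorbit x v : X x -> DE X E x v -> tangent (Eorbit E x) x v.
Proof.
move=> Xx [d [iota [c [iotaE [Tc ->]]]]].
have := tangent_map (F := evC_pm d x) _ Tc; rewrite pm_eval_evC_pm pm_diff_evC_pm iotaE //; apply.
by move=> c' [f [Ef fE]]; rewrite pm_eval_evC_pm fE //; exists f.
Qed.

Lemma tangent_Eorbit_phi_orbit x v : X x -> tangent (Eorbit E x) x v ->
  phi_orbit x (pm_diff phi x v) /\ v = pm_diff psi (Phi x) (pm_diff phi x v).
Proof.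
move=> Xx T; split.
  apply: (tangent_subspace (subspace_phi_orbit Xx)); apply: tangent_map T.
  by move=> y /(EorbitE _ Xx) [].
rewrite -pm_diff_comp (tangent_fixed _ T) // => y /(Eorbit_subX Xx) Xy.
by rewrite pm_eval_comp phiK.
Qed.

Lemma dphi_dpsi y u : X y -> phi_orbit y u -> pm_diff phi y (pm_diff psi (Phi y) u) = u.
Proof.
move=> Xy yu; rewrite -{1}(phiK Xy) -pm_diff_comp.
apply: (tangent_fixed (S := phi_orbit y)).
  by move=> z yz; rewrite pm_eval_comp; case: (phi_orbit_psi Xy yz).
exact: (subspace_tangent charK0 (subspace_phi_orbit Xy) (phi_orbit_self y) yu).
Qed.

Lemma dpsi_DE x u : X x -> phi_orbit x u -> DE X E x (pm_diff psi (Phi x) u).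
Proof.
move=> Xx [g Eg ->]; have [Gp GpE] := E_morphism Eg.
(* [P i] is psi_i o (phi + t phi o g) as a polynomial in t; by linearity of E every
   value at t is (the restriction to X of) an element of E. *)
pose P i : {poly {mpoly K[n]}} := mmap (fun c => c%:MP_[n]%:P)
  (fun j => (phi j)%:P + (mcomp Gp (phi j))%:P * 'X) (psi i).
have PE y i : map_poly (meval y) (P i) = pcurve (pline (Phi y) (Phi (pm_eval Gp y))) (psi i).
  rewrite /P rmorph_mmap; apply: eq_mmap => [c | j] /=.
    by rewrite map_polyC; congr (_%:P); apply: mevalC.
  by rewrite rmorphD rmorphM /= !map_polyC map_polyX /pline /pm_eval -meval_mcomp.
have -> : pm_diff psi (Phi x) (Phi (g x)) = fun i => ((map_poly (meval x) (P i))^`()).[0].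
  by apply: functional_extensionality => i; rewrite PE -diffp_pline GpE.
apply: DE_of_curve => // [t | y Xy].
  have [h [Eh hE]] := linE 1 t E_id Eg; exists h => // y Xy.
  rewrite -(phiK (E_maps_to Eh Xy)) hE //; apply: functional_extensionality => i.
  rewrite PE horner_pcurve /pm_eval; apply: meval_eq => j.
  by rewrite horner_pline mul1r GpE // mulrC.
rewrite -[RHS](phiK Xy); apply: functional_extensionality => i.
by rewrite PE horner_pcurve; apply: meval_eq => j; rewrite pline0.
Qed.

Lemma tangent_EorbitE x v : X x -> tangent (Eorbit E x) x v <-> DE X E x v.
Proof.
move=> Xx; split; last exact: DE_tangent_Eorbit.
by case/(tangent_Eorbit_phi_orbit Xx) => xv ->; apply: dpsi_DE.
Qed.

Local Notation field := ('I_m -> {mpoly K[n]}).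

Definition orbit_field (l : field) : Prop := forall y, X y -> phi_orbit y (pm_eval l y).

Definition dpsi_field (l : field) : 'I_n -> {mpoly K[n]} :=
  fun i => \sum_(k < m) mcomp phi (mderiv k (psi i)) * l k.

Lemma pm_eval_dpsi_field l y : pm_eval (dpsi_field l) y = pm_diff psi (Phi y) (pm_eval l y).
Proof.
apply: functional_extensionality => i; rewrite /pm_eval /dpsi_field raddf_sum.
by apply: eq_bigr => k _; rewrite /= mevalM meval_mcomp.
Qed.

Definition field_deriv (l0 l : field) : field := fun j => mderiv_along (dpsi_field l0) (l j).

Lemma orbit_field_deriv l0 l : orbit_field l0 -> orbit_field l -> orbit_field (field_deriv l0 l).
Proof.
move=> fl0 fl y Xy; have yl0 := fl0 y Xy; have [_ yW] := subspace_phi_orbit Xy.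
pose G i := pcurve (pline (Phi y) (pm_eval l0 y)) (psi i).
have G_Eorbit t : Eorbit E y (fun i => (G i).[t]).
  have [+ _] := phi_orbit_psi Xy (yW 1 t _ _ (phi_orbit_self y) yl0).
  congr (Eorbit E y); apply: functional_extensionality => i.
  by rewrite /G horner_pcurve /pm_eval; apply: meval_eq => j; rewrite horner_pline mul1r mulrC.
pose H j := pcurve G (l j).
have : tangent (phi_orbit y) (fun j => (H j).[0]) (fun j => (H j)^`().[0]).
  apply: tangent_curve => // t; have [h [Eh hy]] := G_Eorbit t.
  apply: (phi_orbit_comp Eh); rewrite -hy.
  have := fl _ (E_maps_to Eh Xy); rewrite -hy; congr (phi_orbit _).
  by apply: functional_extensionality => j; rewrite /H horner_pcurve.
move/(tangent_subspace (subspace_phi_orbit Xy)); congr (phi_orbit y).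
apply: functional_extensionality => j.
rewrite /H deriv0_pcurve /pm_eval /field_deriv meval_mderiv_along.
apply: eq_diffp => i; last by rewrite pm_eval_dpsi_field /G -diffp_pline.
by rewrite /G horner_pcurve -(meval_psi_phi i Xy); apply: meval_eq => k; rewrite pline0.
Qed.

Lemma orbit_fields_replace_each l0 ls : orbit_field l0 -> List.Forall orbit_field ls ->
  List.Forall (fun ls' => size ls' = size ls /\ List.Forall orbit_field ls')
    (replace_each (field_deriv l0) ls).
Proof.
move=> fl0; elim: ls => [|l ls IH] //= /List.Forall_cons_iff [fl fls].
constructor; first by split=> //; constructor; [apply: orbit_field_deriv | ].
elim: (replace_each (field_deriv l0) ls) (IH fls) => [|ls' rs IHrs] //=.
case/List.Forall_cons_iff => -[size_ls' fls'] /IHrs Frs.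
by constructor=> //; split; [rewrite /= size_ls' | constructor].
Qed.

(* Induction on the number of fields: the field dpsi_field l0 is in D_E, hence tangent
   to Y, and the Leibniz correction terms vanish by induction because field_deriv l0
   preserves orbit fields. *)
Lemma dirderivs_along_eq0 (Y : pt K n -> Prop) Q :
  (forall y, Y y -> X y) -> Dinvariant (DE X E) Y -> (forall y, Y y -> (mcomp phi Q).@[y] = 0) ->
  forall ls, List.Forall orbit_field ls -> forall y, Y y -> (dirderivs_along phi ls Q).@[y] = 0.
Proof.
move=> YX DY Q0 ls; move: {2}(size ls) (erefl (size ls)) => k.
elim: k ls => [|k IH] ls; first by move/size0nil => -> _.
case/lastP: ls => [//|ls l0]; rewrite size_rcons => -[size_ls].
rewrite -cats1 => /List.Forall_app [fls /List.Forall_cons_iff [fl0 _]] y Yy.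
have Xy := YX y Yy; pose v := pm_eval (dpsi_field l0) y.
have Tv : tangent Y y v.
  by apply: DY => //; rewrite /v pm_eval_dpsi_field; apply: dpsi_DE => //; apply: fl0.
have := Tv _ (IH ls size_ls fls).
rewrite (@diffp_dirderivs_along _ _ _ _ (field_deriv l0)); last first.
  by move=> l j; rewrite meval_mderiv_along.
have -> : \sum_(ls' <- replace_each (field_deriv l0) ls) (dirderivs_along phi ls' Q).@[y] = 0.
  elim: (replace_each _ _) (orbit_fields_replace_each fl0 fls) => [|ls' rs IHrs].
    by rewrite big_nil.
  case/List.Forall_cons_iff => -[size_ls' fls'] /IHrs; rewrite big_cons => ->.
  by rewrite IH ?addr0 // size_ls'.
rewrite addr0 /v pm_eval_dpsi_field dphi_dpsi //; last exact: fl0.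
by rewrite cats1 meval_dirderivs_along map_rcons.
Qed.

Lemma Estable_of_Dinvariant Y : subvar X Y -> Dinvariant (DE X E) Y -> Estable E Y.
Proof.
move=> [[PY YE] YX] DY g Eg y Yy; apply/YE => p Pp.
have p0 y' : Y y' -> p.@[y'] = 0 by move/YE; apply.
have Xy := YX y Yy; have [Gp GpE] := E_morphism Eg.
pose l : field := fun j => mcomp Gp (phi j) - phi j.
have lE y' : X y' -> pm_eval l y' = fun j => 1 * Phi (g y') j + (-1) * Phi y' j.
  move=> Xy'; apply: functional_extensionality => j.
  by rewrite /pm_eval /l mevalB meval_mcomp GpE // mul1r mulN1r.
have fl : orbit_field l.
  move=> y' Xy'; rewrite lE //; have [_ y'W] := subspace_phi_orbit Xy'.
  by apply: y'W; [exists g | apply: phi_orbit_self].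
have gyE : g y = Psi (fun j => Phi y j + pm_eval l y j).
  rewrite -(phiK (E_maps_to Eg Xy)); congr Psi; apply: functional_extensionality => j.
  by rewrite lE // mul1r mulN1r addrC subrK.
rewrite gyE /pm_eval -meval_mcomp; apply: taylor_eq0 => // k.
have -> : nseq k (pm_eval l y) = [seq pm_eval l' y | l' <- nseq k l] by rewrite map_nseq.
rewrite -meval_dirderivs_along.
apply: (dirderivs_along_eq0 YX DY) => // [y' Yy' | ].
  by rewrite !meval_mcomp -[RHS](p0 y' Yy') -[in RHS](phiK (YX y' Yy')).
by elim: k => [|k IH] //; constructor.
Qed.

Lemma Dinvariant_Eorbit x : X x -> Dinvariant (DE X E) (Eorbit E x).
Proof.
move=> Xx y xy v Dv; apply: tangentS (DE_tangent_Eorbit (Eorbit_subX Xx xy) Dv).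
by move=> z; apply: Eorbit_trans.
Qed.

Lemma IsM_Eorbit x : zclosed X -> X x -> IsM X (DE X E) x (Eorbit E x).
Proof.
move=> clX Xx; split; [split|split; [|split]].
- exact: zclosed_Eorbit.
- by move=> y; apply: Eorbit_subX.
- exact: Dinvariant_Eorbit.
- by exists id; split=> //; apply: E_id.
- by move=> Y subY DY Yx y [f [Ef ->]]; apply: (Estable_of_Dinvariant subY DY Ef).
Qed.

Lemma Dinvariant_EstableE Y : subvar X Y -> Dinvariant (DE X E) Y <-> Estable E Y.
Proof.
move=> subY; split; first exact: Estable_of_Dinvariant.
move=> stY y Yy v Dv; apply: tangentS (DE_tangent_Eorbit (subY.2 y Yy) Dv).
by move=> z [f [Ef ->]]; apply: stY.
Qed.

End LinearSemigroup.

Lemma IsM_unique (K : closedFieldType) n (X : pt K n -> Prop) D x (M M' : pt K n -> Prop) :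
  IsM X D x M -> IsM X D x M' -> forall y, M y <-> M' y.
Proof.
move=> [subM [DM [Mx minM]]] [subM' [DM' [M'x minM']]] y.
by split; [apply: minM | apply: minM'].
Qed.

Theorem theorem3p3p2 (K : closedFieldType) (hK : [pchar K] =i pred0)
  (n : nat) (X : pt K n -> Prop) (E : (pt K n -> pt K n) -> Prop) :
  zclosed X -> End_semisubgroup X E -> End_closed X E -> linear_semigroup X E ->
  (forall x, X x -> IsM X (DE X E) x (Eorbit E x)) /\
  (forall x, X x -> zclosed (Eorbit E x) /\ isAffineSpace (Eorbit E x)) /\
  (forall x, X x -> forall M, IsM X (DE X E) x M ->
     (forall v, tangent M x v <-> tangent (Eorbit E x) x v) /\
     (forall v, tangent (Eorbit E x) x v <-> DE X E x v)) /\
  (forall Y, subvar X Y -> (Dinvariant (DE X E) Y <-> Estable E Y)).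
Proof.
move=> clX semiE _ [m [phi [psi [_ [phiK linE]]]]].
have orbitM x : X x -> IsM X (DE X E) x (Eorbit E x) := IsM_Eorbit hK semiE phiK linE clX.
split; [exact: orbitM | split; [|split]].
- move=> x Xx; split; first exact: (zclosed_Eorbit semiE phiK linE clX Xx).
  exact: (isAffineSpace_Eorbit semiE phiK linE Xx).
- move=> x Xx M isM; split=> v; last exact: (tangent_EorbitE hK semiE phiK linE v Xx).
  by have MO := IsM_unique isM (orbitM x Xx); split; apply: tangentS => y /MO.
- move=> Y subY; exact: (Dinvariant_EstableE hK semiE phiK linE subY).
Qed.
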